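(* Let $p$ be a prime, $K\in\{\mathbb Z_{(p)},\mathbb Z_p\}$, $F$ a field containing $K$, $G=\langle a\rangle\cong C_{p^2}$, $\Phi(x)=x^{p-1}+\dots+x+1$, and for $0\leq i\leq p-1$ let $Y_i$ be the $KC_{p^2}$-submodule of $KC_{p^2}$ generated by $\Phi(a)$ and $(a-1)^i$. Then for every $1$-cocycle $T:C_{p^2}\to\widehat{Y_i}$ the group $\mathrm{Crys}(C_{p^2};Y_i;T)$ contains an element of order $p$.
   Context: $FM=F\otimes_KM$, $\widehat M=FM/M$ with $g(x+M)=gx+M$; a $1$-cocycle is $T:G\to\widehat M$ with $T(gh)=gT(h)+T(g)$. $\mathrm{Crys}(G;M;T)=\{(g,x):g\in G,\ x\in FM,\ x+M=T(g)\}$ with $(g,x)(g',x')=(gg',g'x+x')$. *)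

From HB Require Import structures.
From mathcomp Require Import all_boot all_order all_algebra.
Unset Printing Implicit Defensive.
Import Order.TTheory GRing.Theory Num.Theory.
Local Open Scope ring_scope.

Section Defs.
Variable F : fieldType.

Definition subring_of (K : pred F) :=
  [/\ K 0, K 1, {in K &, forall x y, K (x - y)} & {in K &, forall x y, K (x * y)}].

Definition pmultK (K : pred F) (p n : nat) (x : F) :=
  exists2 y, K y & x = (p%:R ^+ n) * y.

Definition is_Zloc_p (p : nat) (K : pred F) :=
  [pchar F] =i pred0 /\
  forall x, K x <-> exists m s : int, ~~ (p%:Z %| s)%Z /\ x = m%:~R / s%:~R.

(** K is a subring of F isomorphic to the p-adic integers Z_p = lim Z/p^n Z:
    the canonical maps K/p^nK <- Z/p^nZ are isomorphisms and
    K -> lim K/p^nK is bijective (separated and complete). *)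
Definition is_Zp (p : nat) (K : pred F) :=
  [/\ subring_of K,
      forall n x, K x -> exists m : int, pmultK K p n (x - m%:~R),
      forall n (m : int), pmultK K p n m%:~R -> (p%:Z ^+ n %| m)%Z,
      forall x, K x -> (forall n, pmultK K p n x) -> x = 0 &
      forall c : nat -> int, (forall n, (p%:Z ^+ n %| c n.+1 - c n)%Z) ->
        exists2 x, K x & forall n, pmultK K p n (x - (c n)%:~R)].

(** Group ring F C_N modelled as F[X]/(X^N - 1), generator a = X. *)
Definition eqFG (N : nat) (x y : {poly F}) : Prop := ('X^N - 1) %| (x - y).

Definition Phi (p : nat) : {poly F} := \sum_(j < p) 'X^j.

(** all coefficients in K, i.e. a representative of an element of K C_N *)
Definition polyK (K : pred F) (q : {poly F}) := forall j, K q`_j.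

Definition inY (p i : nat) (K : pred F) (q : {poly F}) :=
  exists u v, [/\ polyK K u, polyK K v &
                  eqFG (p ^ 2) q (u * Phi p + v * ('X - 1) ^+ i)].

Definition inFY (p i : nat) (q : {poly F}) :=
  exists u v : {poly F}, eqFG (p ^ 2) q (u * Phi p + v * ('X - 1) ^+ i).

(** C_{p^2} = <a> is modelled as 'Z_(p^2) (written additively, a <-> 1);
    g acts on FG by multiplication by X^g.  A 1-cocycle with values in
    F Y_i / Y_i is represented by representatives T g in F Y_i; the
    cocycle identity holds modulo Y_i. *)
Definition is_cocycle (p i : nat) (K : pred F) (T : 'Z_(p ^ 2) -> {poly F}) :=
  (forall g, inFY p i (T g)) /\
  (forall g h, inY p i K (T (g + h) - ('X^g * T h + T g))).

Definition in_crys (p i : nat) (K : pred F) (T : 'Z_(p ^ 2) -> {poly F})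
  (u : 'Z_(p ^ 2) * {poly F}) := inFY p i u.2 /\ inY p i K (u.2 - T u.1).

Definition crys_mul (p : nat) (u v : 'Z_(p ^ 2) * {poly F}) : 'Z_(p ^ 2) * {poly F} :=
  (u.1 + v.1, 'X^(v.1) * u.2 + v.2).

Definition crys_one (p : nat) : 'Z_(p ^ 2) * {poly F} := (0, 0).

Definition crys_exp (p : nat) (u : 'Z_(p ^ 2) * {poly F}) (n : nat) :=
  iter n (fun w => crys_mul p w u) (crys_one p).

Definition crys_eq (p : nat) (u v : 'Z_(p ^ 2) * {poly F}) :=
  u.1 = v.1 /\ eqFG (p ^ 2) u.2 v.2.

Definition crys_order (p : nat) (u : 'Z_(p ^ 2) * {poly F}) (n : nat) :=
  crys_eq p (crys_exp p u n) (crys_one p) /\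
  forall k, (0 < k < n)%N -> ~ crys_eq p (crys_exp p u k) (crys_one p).

End Defs.

Arguments subring_of {F} K.
Arguments pmultK {F} K p n x.
Arguments is_Zloc_p {F} p K.
Arguments is_Zp {F} p K.
Arguments eqFG {F} N x y.
Arguments Phi {F} p.
Arguments polyK {F} K q.
Arguments inY {F} p i K q.
Arguments inFY {F} p i q.
Arguments is_cocycle {F} p i K T.
Arguments in_crys {F} p i K T u.
Arguments crys_mul {F} p u v.
Arguments crys_one {F} p.
Arguments crys_exp {F} p u n.
Arguments crys_eq {F} p u v.
Arguments crys_order {F} p u n.

From HB Require Import structures.
From mathcomp Require Import all_boot all_order all_algebra.
From mathcomp Require Import ring.
Import GRing.Theory.

Set Implicit Arguments.
Unset Strict Implicit.
Unset Printing Implicit Defensive.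

Local Open Scope ring_scope.

(* Write T1 for T(a).  The cocycle identity gives T(a^m) = Phi_m(a) T1 modulo
   Y_i, and a^(p^2) = 1 then puts Phi_(p^2)(a) T1 in Y_i.  As (a - 1) kills
   Phi_(p^2)(a), this element is c Phi_(p^2)(a) with c = T1(1) the augmentation
   of T1, and reading off the coefficient of the identity shows c in K.
   The element (a^p, Phi(a)(T1 - c)) lies in the crystallographic group, since
   its second entry differs from T(a^p) by c Phi(a) in Y_i, and its p-th power
   is (1, (a^(p^2) - 1) q) = 1 because T1 - c = q (a - 1). *)

Lemma intr_eq0_pchar0 (F : fieldType) (s : int) :
  [pchar F] =i pred0 -> (s%:~R == 0 :> F) = (s == 0).
Proof.
move=> /pcharf0P F0; case: s => n; first by rewrite /= F0.
by rewrite NegzE mulrNz oppr_eq0 F0.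
Qed.

Lemma Zloc_subring (F : fieldType) (p : nat) (K : pred F) :
  prime p -> is_Zloc_p p K -> subring_of K.
Proof.
move=> p_pr [F0 K_E].
have unit_den (s : int) : ~~ (p%:Z %| s)%Z -> (s%:~R : F) != 0.
  by apply: contra; rewrite intr_eq0_pchar0 // => /eqP->; apply: dvdz0.
have ndvdM (s s' : int) :
    ~~ (p%:Z %| s)%Z -> ~~ (p%:Z %| s')%Z -> ~~ (p%:Z %| s * s')%Z.
  by rewrite !dvdzE abszM Euclid_dvdM // => /negPf-> /negPf->.
have ndvd1 : ~~ (p%:Z %| 1)%Z.
  by rewrite dvdzE /= dvdn1 neq_ltn prime_gt1 ?orbT.
split.
- by apply/K_E; exists 0%Z, 1%Z; rewrite mul0r.
- by apply/K_E; exists 1%Z, 1%Z; rewrite divr1.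
- move=> _ _ /K_E[m [s [Ns ->]]] /K_E[m' [s' [Ns' ->]]].
  apply/K_E; exists (m * s' - m' * s)%R, (s * s')%R; split; first exact: ndvdM.
  move: (unit_den _ Ns) (unit_den _ Ns'); rewrite !intrM intrB !intrM => s0 s'0.
  by field; apply/andP.
- move=> _ _ /K_E[m [s [Ns ->]]] /K_E[m' [s' [Ns' ->]]].
  apply/K_E; exists (m * m')%R, (s * s')%R; split; first exact: ndvdM.
  move: (unit_den _ Ns) (unit_den _ Ns'); rewrite !intrM => s0 s'0.
  by field; apply/andP.
Qed.

Lemma dvdp_Xn1_XmB (F : fieldType) (n m : nat) :
  ('X^n - 1 : {poly F}) %| 'X^m - 'X^(m %% n).
Proof.
rewrite {1}(divn_eq m n) exprD mulnC exprM -[X in _ %| _ - X]mul1r -mulrBl.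
by rewrite (subrX1 (_ ^+ n)) -mulrA dvdp_mulr.
Qed.

Lemma Phi_poly (F : fieldType) (n : nat) : Phi n = \poly_(j < n) (1 : F).
Proof. by rewrite poly_def; apply: eq_bigr => j _; rewrite scale1r. Qed.

Lemma mulXsub1_Phi (F : fieldType) (n : nat) :
  ('X - 1) * Phi n = 'X^n - 1 :> {poly F}.
Proof. by rewrite subrX1. Qed.

Lemma Phi_mul_subhorner1 (F : fieldType) (n : nat) (P : {poly F}) :
  Phi n * (P - P.[1]%:P) = (P - P.[1]%:P) %/ ('X - 1) * ('X^n - 1).
Proof.
have dvd_P : 'X - 1 %| P - P.[1]%:P.
  by rewrite -polyC1; apply/polyXsubCP; rewrite hornerD hornerN hornerC subrr.
by rewrite -mulXsub1_Phi mulrA divpK // mulrC.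
Qed.

Section IdentityCoefficient.
Variables (F : fieldType) (N : nat).
Hypothesis N_gt0 : (0 < N)%N.

(* The coefficient of the identity of C_N in the class of P in F[X]/(X^N - 1),
   provided P has degree below B * N. *)
Definition coef1_FG (B : nat) (P : {poly F}) : F := \sum_(k < B) P`_(k * N).

Lemma coef1_FGB B (P Q : {poly F}) :
  coef1_FG B (P - Q) = coef1_FG B P - coef1_FG B Q.
Proof. by rewrite -sumrB; apply: eq_bigr => k _; rewrite coefB. Qed.

Lemma coef1_FG_XnM B (P : {poly F}) : coef1_FG B.+1 ('X^N * P) = coef1_FG B P.
Proof.
rewrite /coef1_FG big_ord_recl /= coefXnM mul0n N_gt0 add0r.
apply: eq_bigr => k _; rewrite coefXnM /bump /= add1n mulSn.
by rewrite ltnNge leq_addr /= addKn.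
Qed.

Lemma coef1_FG_mul_Xn1 (P : {poly F}) :
  coef1_FG (size P).+1 (P * ('X^N - 1)) = 0.
Proof.
rewrite mulrBr mulr1 coef1_FGB mulrC coef1_FG_XnM /coef1_FG big_ord_recr /=.
by rewrite nth_default ?addr0 ?subrr // leq_pmulr.
Qed.

Lemma coef1_FG_CPhi B (c : F) : coef1_FG B.+1 (c%:P * Phi N) = c.
Proof.
rewrite /coef1_FG big_ord_recl big1 ?addr0 => [|k _];
  rewrite coefCM Phi_poly coef_poly.
  by rewrite mul0n N_gt0 mulr1.
by rewrite lift0 mulSn ltnNge leq_addr mulr0.
Qed.

End IdentityCoefficient.

Section CrysPowers.
Variables (F : fieldType) (p : nat).

Lemma crys_exp_pair (g : 'Z_(p ^ 2)) (x : {poly F}) k :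
  crys_exp p (g, x) k = (g *+ k, (\sum_(j < k) 'X^(g * j)) * x).
Proof.
elim: k => [|k IHk]; first by rewrite /crys_exp /= big_ord0 mul0r.
rewrite /crys_exp iterS -/(crys_exp p (g, x) k) IHk /crys_mul /= mulrSr.
rewrite big_ord_recl /= muln0 expr0 mulrDl mul1r mulrA mulr_sumr.
congr (_, _); rewrite [RHS]addrC; congr (_ * _ + _); apply: eq_bigr => j _.
by rewrite -exprD /bump /= add1n mulnS.
Qed.

Lemma crys_order_Xp1 (q : {poly F}) :
  (1 < p)%N -> crys_order p (p%:R, q * ('X^p - 1)) p.
Proof.
move=> p_gt1; have p_lt_p2 : (p < p ^ 2)%N by rewrite -mulnn ltn_Pmull // ltnW.
have p2_gt1 := ltn_trans p_gt1 p_lt_p2.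
have val_pk k : (p%:R : 'Z_(p ^ 2)) *+ k = (p * k %% p ^ 2)%N :> nat.
  by rewrite -mulrnA val_Zp_nat.
have val_p : (p%:R : 'Z_(p ^ 2)) = p :> nat by rewrite val_Zp_nat // modn_small.
split.
  rewrite crys_exp_pair; split.
    by apply: val_inj; rewrite /= val_pk mulnn modnn.
  rewrite /eqFG /= subr0 val_p mulrCA dvdp_mull // mulrC -mulnn exprM subrX1.
  by under eq_bigr do rewrite exprM.
have lt_pk_p2 k : (k < p)%N -> (p * k < p ^ 2)%N.
  by move=> ?; rewrite -mulnn ltn_pmul2l // ltnW.
move=> k /andP[k_gt0 /lt_pk_p2 pk_lt]; rewrite crys_exp_pair => -[/(congr1 val)].
rewrite /= val_pk modn_small // => /eqP; rewrite muln_eq0.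
by rewrite gtn_eqF ?(gtn_eqF k_gt0) // ltnW.
Qed.

End CrysPowers.

Section SubmoduleY.
Variables (F : fieldType) (K : pred F).
Hypothesis K_subring : subring_of K.

Lemma subring_of_closed : subring_closed K.
Proof. by case: K_subring => _ K1 KB KM; split. Qed.

HB.instance Definition _ := GRing.isSubringClosed.Build F K subring_of_closed.

Lemma polyOver_Phi n : Phi n \is a polyOver K.
Proof. by apply: rpred_sum => j _; rewrite rpredX ?polyOverX. Qed.

Variables p i : nat.

Lemma inY_eqFG q q' : inY p i K q -> eqFG (p ^ 2) q q' -> inY p i K q'.
Proof.
move=> [u [v [Ku Kv Dq]]] qq'; exists u, v; split => //.
rewrite /eqFG; have -> : q' - (u * Phi p + v * ('X - 1) ^+ i) =
    (q - (u * Phi p + v * ('X - 1) ^+ i)) - (q - q') by ring.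
exact: dvdp_sub.
Qed.

Lemma inYD q q' : inY p i K q -> inY p i K q' -> inY p i K (q + q').
Proof.
move=> [u [v [/polyOverP Ku /polyOverP Kv Dq]]].
move=> [u' [v' [/polyOverP Ku' /polyOverP Kv' Dq']]].
exists (u + u'), (v + v'); split; try by apply/polyOverP; rewrite rpredD.
rewrite /eqFG; have -> :
    q + q' - ((u + u') * Phi p + (v + v') * ('X - 1) ^+ i) =
    (q - (u * Phi p + v * ('X - 1) ^+ i))
    + (q' - (u' * Phi p + v' * ('X - 1) ^+ i)) by ring.
exact: dvdp_add.
Qed.

Lemma inYN q : inY p i K q -> inY p i K (- q).
Proof.
move=> [u [v [/polyOverP Ku /polyOverP Kv Dq]]].
exists (- u), (- v); split; try by apply/polyOverP; rewrite rpredN.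
by rewrite /eqFG !mulNr -opprD -opprD dvdpNr.
Qed.

Lemma inYB q q' : inY p i K q -> inY p i K q' -> inY p i K (q - q').
Proof. by move=> Yq Yq'; apply: inYD => //; apply: inYN. Qed.

Lemma inY_CPhi c : K c -> inY p i K (c%:P * Phi p).
Proof.
move=> Kc; exists c%:P, 0.
split; try by apply/polyOverP; rewrite ?polyOverC ?rpred0.
by rewrite /eqFG mul0r addr0 subrr dvdp0.
Qed.

Lemma inY_CPhi_sq_K c : (0 < p)%N -> inY p i K (c%:P * Phi (p ^ 2)) -> K c.
Proof.
move=> p_gt0 [u [v [/polyOverP Ku /polyOverP Kv /dvdpP[Q DQ]]]].
have p2_gt0 : (0 < p ^ 2)%N by rewrite expn_gt0 p_gt0.
have := coef1_FG_mul_Xn1 p2_gt0 Q; rewrite -DQ coef1_FGB (coef1_FG_CPhi p2_gt0).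
move=> /eqP; rewrite subr_eq0 => /eqP->; apply: rpred_sum => k _; apply/polyOverP.
by rewrite rpredD ?rpredM ?rpredX ?rpredB ?polyOverX ?rpred1 ?polyOver_Phi //;
  apply/polyOverP.
Qed.

Section Cocycle.
Variable T : 'Z_(p ^ 2) -> {poly F}.
Hypotheses (p_gt1 : (1 < p)%N) (T_cocycle : is_cocycle p i K T).

Let p2_gt1 : (1 < p ^ 2)%N.
Proof. by rewrite -mulnn (ltn_trans p_gt1) // ltn_Pmull // ltnW. Qed.

Lemma cocycle0 : inY p i K (T 0).
Proof.
have := T_cocycle.2 0 0; rewrite addr0 expr0 mul1r.
have -> : T 0 - (T 0 + T 0) = - T 0 by ring.
by move/inYN; rewrite opprK.
Qed.

Lemma cocycle_natr m : inY p i K (T m%:R - Phi m * T 1).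
Proof.
elim: m => [|m IHm]; first by rewrite /Phi big_ord0 mul0r subr0; apply: cocycle0.
have := inYD (T_cocycle.2 m%:R 1) IHm; rewrite -mulrSr => Y_sum.
apply: inY_eqFG Y_sum _; rewrite /eqFG /Phi big_ord_recr -/(Phi m) /=.
have -> : T m.+1%:R - ('X^(m%:R : 'Z_(p ^ 2)) * T 1 + T m%:R)
    + (T m%:R - Phi m * T 1) - (T m.+1%:R - (Phi m + 'X^m) * T 1)
    = ('X^m - 'X^(m%:R : 'Z_(p ^ 2))) * T 1 by ring.
by rewrite dvdp_mulr // val_Zp_nat // dvdp_Xn1_XmB.
Qed.

Lemma cocycle_Phi_sq : inY p i K (Phi (p ^ 2) * T 1).
Proof.
have p2_eq0 : (p ^ 2)%:R = 0 :> 'Z_(p ^ 2).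
  by apply: val_inj; rewrite /= val_Zp_nat ?modnn.
have := inYB cocycle0 (cocycle_natr (p ^ 2)); rewrite p2_eq0.
by have -> : T 0 - (T 0 - Phi (p ^ 2) * T 1) = Phi (p ^ 2) * T 1 by ring.
Qed.

Lemma cocycle_horner1_K : K (T 1).[1].
Proof.
apply: (inY_CPhi_sq_K (ltnW p_gt1)); apply: inY_eqFG cocycle_Phi_sq _.
by rewrite /eqFG [_%:P * _]mulrC -mulrBr Phi_mul_subhorner1 dvdp_mull.
Qed.

Lemma in_crys_Phi_subhorner1 :
  in_crys p i K T (p%:R, Phi p * (T 1 - (T 1).[1]%:P)).
Proof.
split=> /=.
  by exists (T 1 - (T 1).[1]%:P), 0; rewrite /eqFG mul0r addr0 mulrC subrr dvdp0.
have := inYB (inYN (cocycle_natr p)) (inY_CPhi cocycle_horner1_K).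
by have -> : - (T p%:R - Phi p * T 1) - (T 1).[1]%:P * Phi p =
  Phi p * (T 1 - (T 1).[1]%:P) - T p%:R by ring.
Qed.

End Cocycle.

End SubmoduleY.

Theorem lemma9 (p : nat) (F : fieldType) (K : pred F) (i : nat)
    (T : 'Z_(p ^ 2) -> {poly F}) :
  prime p ->
  is_Zloc_p p K \/ is_Zp p K ->
  (i <= p.-1)%N ->
  is_cocycle p i K T ->
  exists u : 'Z_(p ^ 2) * {poly F}, in_crys p i K T u /\ crys_order p u p.
Proof.
move=> p_pr K_Zp _ T_cocycle; have p_gt1 := prime_gt1 p_pr.
have K_subring : subring_of K by case: K_Zp => [/(Zloc_subring p_pr) | []].
exists (p%:R, Phi p * (T 1 - (T 1).[1]%:P)); split.
  exact: in_crys_Phi_subhorner1.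
by rewrite Phi_mul_subhorner1; apply: crys_order_Xp1.
Qed.
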